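(* Let $k\geq 3$ be an integer, let $G$ be a graph, and let $G'$ be the graph obtained from $G$ by the $k$-edge-gadget transformation (with respect to any choice of orientations). Then every $k$-partial $k$-coloring $\gamma$ of $G'$ satisfies $\gamma(u)\neq\gamma(v)$ for every edge $\{u,v\}\in E(G)$.
   Context: A $k$-partial $c$-coloring of a graph $G=(V,E)$ is a map $\gamma:V\to\{1,\dots,c\}$ such that every vertex $v$ has at least $\min\{k,\deg_G(v)\}$ neighbors $u$ with $\gamma(u)\neq\gamma(v)$. The $k$-edge-gadget transformation: given a graph $G$ and, for each edge $\{u,v\}\in E(G)$, a fixed choice of ordered pair $(u,v)$, the graph $G'$ is obtained from $G$ by keeping all vertices of $G$, deleting every edge $\{u,v\}$ of $G$, and for each such edge adding $k$ new vertices $(u,v,1),\dots,(u,v,k)$ that form a clique $K_k$, together with the edges $\{u,(u,v,j)\}$ for $j=1,\dots,k-1$ and the edge $\{v,(u,v,k)\}$. (The gadget vertices of distinct edges are distinct.) *)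

From mathcomp Require Import all_boot.
Set Implicit Arguments. Unset Strict Implicit. Unset Printing Implicit Defensive.

Definition simple_graph (T : finType) (adj : rel T) :=
  symmetric adj /\ irreflexive adj.

Definition deg (T : finType) (adj : rel T) (x : T) : nat := #|[set y | adj x y]|.

(* k-partial c-coloring: colours 1..c are represented by 'I_c. *)
Definition partial_coloring (T : finType) (adj : rel T) (k c : nat)
    (gamma : T -> 'I_c) : Prop :=
  forall x : T,
    minn k (deg adj x) <= #|[set y | adj x y & gamma y != gamma x]|.

(* An orientation of the edges of G: for every edge {u,v} exactly one of
   o u v, o v u holds; o u v means the chosen ordered pair is (u,v). *)
Definition orientation (V : finType) (e : rel V) (o : rel V) : Prop :=
  forall u v, e u v -> o u v = ~~ o v u.

Section Gadget.
Variables (V : finType) (e : rel V) (o : rel V) (k : nat).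

(* Gadget vertex (u,v,j+1), j : 'I_k, for every oriented edge (u,v). *)
Definition gadget_pred (x : V * V * 'I_k) : bool := e x.1.1 x.1.2 && o x.1.1 x.1.2.
Definition gadget_vertex := {x : V * V * 'I_k | gadget_pred x}.

Definition gvert := (V + gadget_vertex)%type.

Definition orig_gadget_adj (a : V) (x : gadget_vertex) : bool :=
  let: (u, v, j) := val x in
  ((a == u) && (j.+1 < k)) || ((a == v) && (j.+1 == k)).

Definition gadj (x y : gvert) : bool :=
  match x, y with
  | inl _, inl _ => false
  | inl a, inr g => orig_gadget_adj a g
  | inr g, inl a => orig_gadget_adj a g
  | inr g, inr h => ((val g).1 == (val h).1) && (g != h)
  end.
End Gadget.

(* A gadget vertex has at most k neighbours (k - 1 in its clique and one
   original vertex), so a k-partial colouring must give all of them colours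
   different from its own. The k clique vertices of the gadget of an oriented
   edge (u,v) therefore use all k colours; the one coloured like u is not
   adjacent to u, hence it is the last one, which is adjacent to v. *)
From mathcomp Require Import all_boot.

Set Implicit Arguments.
Unset Strict Implicit.
Unset Printing Implicit Defensive.

Lemma partial_coloring_nbr_neq (T : finType) (adj : rel T) (k c : nat)
    (gamma : T -> 'I_c) (x y : T) :
  partial_coloring adj k gamma -> deg adj x <= k -> adj x y ->
  gamma y != gamma x.
Proof.
move=> /(_ x) + hdeg hxy; rewrite (minn_idPr hdeg) /deg => hcol.
set N := [set z | adj x z] in hcol.
set D := [set z | adj x z & gamma z != gamma x] in hcol.
have sDN : D \subset N by apply/subsetP => z; rewrite !inE => /andP [].
have eDN : D = N by apply/eqP; rewrite eqEcard sDN hcol.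
have : y \in D by rewrite eDN inE.
by rewrite inE => /andP [].
Qed.

Section Gadget.
Variables (V : finType) (e o : rel V) (k : nat).

Local Notation gadj := (@gadj V e o k).
Local Notation gadget := (gadget_vertex e o k).

Lemma gadget_vertex_inj (g h : gadget) :
  (val g).1 = (val h).1 -> (val g).2 = (val h).2 -> g = h.
Proof.
by move=> e1 e2; apply: val_inj; rewrite [val g]surjective_pairing e1 e2 -surjective_pairing.
Qed.

Lemma orig_gadget_adj_uniq (a b : V) (x : gadget) :
  orig_gadget_adj a x -> orig_gadget_adj b x -> a = b.
Proof.
case: x => [[[u v] j] px]; rewrite /orig_gadget_adj /=.
have [/ltn_eqF -> | _] := ltnP j.+1 k; rewrite !andbF ?orbF ?andbT //=.
  by move=> /eqP -> /eqP ->.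
by move=> /andP [/eqP -> _] /andP [/eqP -> _].
Qed.

Lemma deg_gadget (x : gadget) : deg gadj (inr x) <= k.
Proof.
(* The unique original neighbour takes the index of x itself, which no clique
   neighbour has, so indexing the neighbours by 'I_k is injective. *)
pose idx (y : gvert e o k) := if y is inr h then (val h).2 else (val x).2.
have idx_inj : {in [set y | gadj (inr x) y] &, injective idx}.
  move=> y1 y2; rewrite !inE.
  case: y1 y2 => [a1|h1] [a2|h2] /=.
  - by move=> hx1 hx2 _; rewrite (orig_gadget_adj_uniq hx1 hx2).
  - by move=> _ /andP [/eqP e1 /negP nx] e2; case: nx; rewrite (gadget_vertex_inj e1 e2).
  - by move=> /andP [/eqP e1 /negP nx] _ e2; case: nx; rewrite (gadget_vertex_inj e1 (esym e2)).
  - move=> /andP [/eqP e1 _] /andP [/eqP e2 _] e12.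
    by rewrite (@gadget_vertex_inj h1 h2) // -e1 -e2.
by rewrite /deg -[X in _ <= X](card_ord k); apply: leq_card_in idx_inj.
Qed.

Lemma partial_coloring_gadget_neq (gamma : gvert e o k -> 'I_k) (x : gadget) y :
  partial_coloring gadj k gamma -> gadj (inr x) y -> gamma y != gamma (inr x).
Proof. by move=> hgamma; apply: partial_coloring_nbr_neq (deg_gadget x). Qed.

Section OrientedEdge.
Variables (u v : V).
Hypotheses (euv : e u v) (ouv : o u v).

Definition gadget_of_edge (j : 'I_k) : gadget :=
  exist _ (u, v, j) (introT andP (conj euv ouv)).

Lemma gadj_gadget_of_edge (i j : 'I_k) :
  gadj (inr (gadget_of_edge i)) (inr (gadget_of_edge j)) = (i != j).
Proof.
rewrite /= eqxx /=; congr negb; apply/eqP/eqP => [/(congr1 val) [] // | ->] //.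
Qed.

Lemma gadj_gadget_of_edge_head (j : 'I_k) :
  j.+1 < k -> gadj (inr (gadget_of_edge j)) (inl u).
Proof. by move=> jlt; rewrite /= /orig_gadget_adj /= eqxx jlt. Qed.

Lemma gadj_gadget_of_edge_tail (j : 'I_k) :
  j.+1 = k -> gadj (inr (gadget_of_edge j)) (inl v).
Proof. by move=> jlast; rewrite /= /orig_gadget_adj /= jlast !eqxx orbT. Qed.

Lemma partial_coloring_edge_neq (gamma : gvert e o k -> 'I_k) :
  partial_coloring gadj k gamma -> gamma (inl u) != gamma (inl v).
Proof.
move=> hgamma.
pose g j := gamma (inr (gadget_of_edge j)).
have ginj : injective g.
  move=> i j /eqP; apply: contraTeq => nij; rewrite eq_sym.
  by apply: partial_coloring_gadget_neq hgamma _; rewrite gadj_gadget_of_edge.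
have /codomP [j gj] := inj_card_onto ginj (leqnn _) (gamma (inl u)).
have [jlast | jlt] := eqVneq j.+1 k.
  rewrite gj eq_sym; apply: partial_coloring_gadget_neq hgamma _.
  exact: gadj_gadget_of_edge_tail.
have : gamma (inl u) != g j.
  apply: partial_coloring_gadget_neq hgamma _.
  by apply: gadj_gadget_of_edge_head; rewrite ltn_neqAle jlt ltn_ord.
by rewrite -gj eqxx.
Qed.

End OrientedEdge.
End Gadget.

Theorem lemma2 (k : nat) (hk : 3 <= k) (V : finType) (e : rel V)
  (hG : simple_graph e) (o : rel V) (ho : orientation e o)
  (gamma : gvert e o k -> 'I_k)
  (hgamma : @partial_coloring (gvert e o k) (@gadj V e o k) k k gamma) :
  forall u v : V, e u v -> gamma (inl u) != gamma (inl v).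
Proof.
move=> u v euv.
case ouv : (o u v); first exact: partial_coloring_edge_neq.
have evu : e v u by rewrite (proj1 hG).
have ovu : o v u by rewrite (ho v u evu) ouv.
by rewrite eq_sym; apply: partial_coloring_edge_neq evu ovu _ hgamma.
Qed.
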